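(* Let $q\ge 1$ and $n$ be integers with $n\ge q-1$, let $a_1,\dots,a_n\in\mathbb{Z}_q$ be reduced residues (i.e. $\gcd(a_i,q)=1$ for all $i$), and let $\rho\in\mathbb{Z}_q$. Then the number of the $2^n$ choices $(\varepsilon_1,\dots,\varepsilon_n)\in\{0,1\}^n$ for which $\sum_{i=1}^n\varepsilon_i a_i\equiv\rho\pmod q$ is at least $\binom{n}{\lceil (n-q)/2\rceil}_q$. Moreover, this bound is best possible: for all such $q,n$ there exist reduced residues $a_1,\dots,a_n$ and a residue $\rho$ for which equality holds.
   Context: $\mathbb{Z}_q$ denotes the integers modulo $q$. For an integer $s$, the mod $q$ binomial coefficient is $\binom{n}{s}_q=|\{A\subseteq\{1,\dots,n\}: |A|\equiv s \pmod q\}|=\sum_{j\equiv s\ (\mathrm{mod}\ q),\,0\le j\le n}\binom{n}{j}$. *)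

From mathcomp Require Import all_boot all_order all_algebra.
Set Implicit Arguments. Unset Strict Implicit. Unset Printing Implicit Defensive.
Import GRing.Theory Num.Theory.

Definition binom_mod (n : nat) (s : int) (q : nat) : nat :=
  \sum_(0 <= j < n.+1 | ((j%:Z) == s %[mod q%:Z])%Z) 'C(n, j).

(* ceil(m / 2) for an integer m:  ceil(x) = - floor(-x); intdiv's %/ by a
   positive divisor is the floor. *)
Definition ceil_half (m : int) : int := (- (((- m)%R %/ 2)%Z))%R.

Definition nsols (n q : nat) (a : 'I_n -> nat) (rho : nat) : nat :=
  #|[set e : {ffun 'I_n -> bool} |
      (\sum_(i < n) (e i : nat) * a i == rho %[mod q])%N]|.

(* For a set X of residues mod q let N_a(X) count the choices of eps with
   sum_i eps_i a_i in X.  Splitting off a_1 and putting Y = X - a_1 gives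
     N_a(X) = N_a'(X) + N_a'(Y) = N_a'(X :|: Y) + N_a'(X :&: Y),
   and as a_1 generates Z_q, a nonempty proper X is not shift-invariant, so
   |X :&: Y| < |X| = |Y| < |X :|: Y|.  The sums phi_n(k) of k consecutive mod-q
   binomial coefficients of n around (n - q)/2 satisfy the same recursion
   phi_(n+1)(k) = phi_n(k-1) + phi_n(k+1) and are convex in k, so by induction
   N_a(X) >= phi_n(|X|).  For |X| = 1 this is the bound, attained by a_i = 1. *)

From mathcomp Require Import all_boot all_order all_algebra fingroup cyclic.
From mathcomp Require Import zify.
Import GRing.Theory.
Set Implicit Arguments. Unset Strict Implicit. Unset Printing Implicit Defensive.

Definition ffun_cons (T : Type) n (x : T) (f : {ffun 'I_n -> T}) : {ffun 'I_n.+1 -> T} :=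
  [ffun i => if unlift ord0 i is Some j then f j else x].

Lemma ffun_cons_bij (T : Type) n :
  bijective (fun xf : T * {ffun 'I_n -> T} => ffun_cons xf.1 xf.2).
Proof.
exists (fun f : {ffun 'I_n.+1 -> T} =>
          (f ord0, [ffun j => f (lift ord0 j)] : {ffun 'I_n -> T})) => [[x f] | f] /=.
  rewrite /ffun_cons ffunE unlift_none; congr (_, _).
  by apply/ffunP => j; rewrite !ffunE liftK.
by apply/ffunP => i; rewrite !ffunE; case: unliftP => [j|] ->; rewrite ?ffunE.
Qed.

Lemma sum_ffunS (T : finType) n (F : {ffun 'I_n.+1 -> T} -> nat) :
  \sum_f F f = \sum_(x : T) \sum_(f : {ffun 'I_n -> T}) F (ffun_cons x f).
Proof. by rewrite pair_big (reindex _ (onW_bij _ (ffun_cons_bij T n))). Qed.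

Definition subset_sum n (a : 'I_n -> nat) (e : {ffun 'I_n -> bool}) : nat :=
  \sum_(i < n) e i * a i.

Lemma subset_sum_cons n (a : 'I_n.+1 -> nat) b e :
  subset_sum a (ffun_cons b e) = b * a ord0 + subset_sum (fun i => a (lift ord0 i)) e.
Proof.
rewrite /subset_sum big_ord_recl !ffunE unlift_none; congr (_ + _).
by apply: eq_bigr => i _; rewrite ffunE liftK.
Qed.

Section BinomMod.
Variable q : nat.

Lemma binom_mod_congr n s s' :
  (s == s' %[mod q%:Z])%Z -> binom_mod n s q = binom_mod n s' q.
Proof. by move=> /eqP ss'; apply: eq_bigl => j; rewrite ss'. Qed.

Lemma binom_modS n s : binom_mod n.+1 s q = binom_mod n s q + binom_mod n (s - 1)%R q.
Proof.
have shift j : ((j.+1)%:Z == s %[mod q%:Z])%Z = (j%:Z == s - 1 %[mod q%:Z])%Z.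
  by rewrite -[in RHS](eqz_modDr 1) subrK -addn1 PoszD.
rewrite /binom_mod big_mkcond [X in _ = X + _]big_mkcond [X in _ = _ + X]big_mkcond /=.
rewrite big_nat_recl // [X in _ = X + _]big_nat_recl // !bin0 -addnA; congr (_ + _).
rewrite (eq_bigr (fun i => (if (i.+1 == s %[mod q])%Z then 'C(n, i.+1) else 0)
                   + (if (i == s - 1 %[mod q])%Z then 'C(n, i) else 0))); last first.
  by move=> i _; rewrite binS shift; case: ifP.
by rewrite big_split /= big_nat_recr //= bin_small // if_same addn0.
Qed.

End BinomMod.

Section Convexity.
Variables (F : nat -> nat) (m : nat).

Definition convex_upto := forall i, i.+2 <= m -> F i.+1 + F i.+1 <= F i + F i.+2.

Hypothesis F_convex : convex_upto.

Lemma convex_upto_incr a b : a <= b < m -> F a.+1 + F b <= F a + F b.+1.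
Proof.
elim: b => [|b IH] /andP[ab bm].
  by move: ab; rewrite leqn0 => /eqP->; rewrite addnC.
rewrite leq_eqVlt in ab; case/orP: ab => [/eqP-> | ab]; first by lia.
have := IH (introT andP (conj ab (ltnW bm))); have := F_convex bm; lia.
Qed.

Lemma convex_upto_spread a b c d :
  a <= c <= d -> d <= b <= m -> a + b = c + d -> F c + F d <= F a + F b.
Proof.
move eq_t: (c - a) => t; elim: t a b eq_t => [|t IH] a b eq_t ac db sum.
  by rewrite (_ : c = a) 1?(_ : d = b) //; lia.
have := IH a.+1 b.-1 ltac:(lia) ltac:(lia) ltac:(lia) ltac:(lia).
have := @convex_upto_incr a b.-1 ltac:(lia).
have -> : b.-1.+1 = b by lia.
lia.
Qed.

End Convexity.

Lemma convex_upto_rec (F G : nat -> nat) m :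
  G 0 = 0 -> F 0 = 0 -> F m = 2 * G m ->
  (forall k, 0 < k < m -> F k = G k.-1 + G k.+1) ->
  convex_upto G m -> convex_upto F m.
Proof.
move=> G0 F0 Fm Frec G_convex [|i] im.
  have F1 : F 1 = G 0 + G 2 := Frec 1 ltac:(lia).
  have [m2 | m_gt2] := eqVneq m 2; first by subst m; rewrite Fm F0 F1 G0; lia.
  have F2 : F 2 = G 1 + G 3 := Frec 2 ltac:(lia).
  have := G_convex 1 ltac:(lia); rewrite F0 F1 F2 G0; lia.
have F1 : F i.+1 = G i + G i.+2 := Frec i.+1 ltac:(lia).
have F2 : F i.+2 = G i.+1 + G i.+3 := Frec i.+2 ltac:(lia).
have G0c := G_convex i ltac:(lia).
have [m3 | m_gt3] := eqVneq m i.+3; first by subst m; rewrite Fm F1 F2; lia.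
have F3 : F i.+3 = G i.+2 + G i.+4 := Frec i.+3 ltac:(lia).
have := G_convex i.+2 ltac:(lia); rewrite F1 F2 F3; lia.
Qed.

Lemma set_stable_by_generator (gT : finGroupType) (b : gT) (X : {set gT}) :
  <[b]>%g = [set: gT] -> [set x | (x * b)%g \in X] = X -> X = set0 \/ X = [set: gT].
Proof.
move=> gen_b stable; have [-> | [x xX]] := set_0Vmem X; [by left | right].
have xbX k : (x * b ^+ k)%g \in X.
  elim: k => [|k IH]; first by rewrite expg0 mulg1.
  by move: IH; rewrite -{1}stable inE expgSr mulgA.
apply/setP => z; rewrite inE.
have /cycleP[k xz] : (x^-1 * z)%g \in <[b]>%g by rewrite gen_b inE.
by rewrite -(mulKVg x z) xz xbX.
Qed.

Section SubsetSumsModQ.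
Variable p : nat.
Local Notation q := p.+1.

Lemma inZpD m n : inZp (m + n) = (inZp m + inZp n)%R :> 'I_q.
Proof. by apply: val_inj; rewrite /= modnDm. Qed.

Lemma cycle_inZp_coprime c : coprime c q -> <[inZp c : 'I_q]>%g = [set: 'I_q].
Proof.
move=> co_cq; have -> : inZp c = (Zp1 ^+ c)%g :> 'I_q.
  by rewrite Zp_expg; apply: val_inj; rewrite /= modnMml mul1n.
have := generator_coprime (Zp1 : 'I_q) c; rewrite order_Zp1 coprime_sym co_cq -Zp_cycle.
by move=> /eqP.
Qed.

Definition nsums_in n (a : 'I_n -> nat) (X : {set 'I_q}) : nat :=
  \sum_(e : {ffun 'I_n -> bool}) (inZp (subset_sum a e) \in X).

Lemma nsums_inS n (a : 'I_n.+1 -> nat) X :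
  let a' i := a (lift ord0 i) in
  nsums_in a X = nsums_in a' X + nsums_in a' [set x | (x + inZp (a ord0))%R \in X].
Proof.
rewrite /nsums_in sum_ffunS big_bool [LHS]addnC; congr (_ + _).
  by apply: eq_bigr => e _; rewrite subset_sum_cons.
by apply: eq_bigr => e _; rewrite subset_sum_cons inE mul1n addnC inZpD.
Qed.

Lemma nsums_inUI n (a : 'I_n -> nat) X Y :
  nsums_in a X + nsums_in a Y = nsums_in a (X :|: Y) + nsums_in a (X :&: Y).
Proof.
rewrite /nsums_in -!big_split; apply: eq_bigr => e _.
by rewrite in_setU in_setI; case: (_ \in X); case: (_ \in Y).
Qed.

Lemma nsums_inT n (a : 'I_n -> nat) : nsums_in a [set: 'I_q] = 2 ^ n.
Proof.
rewrite /nsums_in; under eq_bigr do rewrite in_setT.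
by rewrite sum_nat_const card_ffun card_bool card_ord muln1.
Qed.

Lemma nsums_in0 n (a : 'I_n -> nat) : nsums_in a set0 = 0.
Proof. by rewrite /nsums_in big1 // => e _; rewrite in_set0. Qed.

Lemma nsums_in_nil (a : 'I_0 -> nat) X : nsums_in a X = (inZp 0 \in X).
Proof.
rewrite /nsums_in (eq_bigr (fun _ => nat_of_bool (inZp 0 \in X))); last first.
  by move=> e _; rewrite /subset_sum big_ord0.
by rewrite sum_nat_const card_ffun card_ord expn0 mul1n.
Qed.

Lemma nsols_nsums_in n (a : 'I_n -> nat) rho : nsols q a rho = nsums_in a [set inZp rho].
Proof.
rewrite /nsols -sum1_card big_mkcond /=; apply: eq_bigr => e _.
by rewrite !inE -val_eqE.
Qed.

Definition window (s k : nat) : {set 'I_q} := [set inZp (s + i) | i : 'I_k].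

Lemma card_window s k : k <= q -> #|window s k| = k.
Proof.
move=> kq; rewrite card_imset ?card_ord // => i j /(congr1 val) /= /eqP.
rewrite eqn_modDl !modn_small => [/eqP/val_inj //||]; exact: leq_trans (ltn_ord _) kq.
Qed.

Lemma window_cat s k l : window s (k + l) = window s k :|: window (s + k) l.
Proof.
apply/setP => x; rewrite inE; apply/imsetP/orP => [[i _ ->] | [] /imsetP[i _ ->]].
- have [ik | ki] := ltnP i k; [left | right]; apply/imsetP.
    by exists (Ordinal ik).
  have il : i - k < l by have := ltn_ord i; lia.
  by exists (Ordinal il); rewrite //= -addnA subnKC.
- by exists (lshift l i).
- by exists (rshift k i); rewrite //= addnA.
Qed.

Lemma window_recl s k : window s k.+1 = window s 1 :|: window s.+1 k.
Proof. by rewrite -[k.+1]add1n window_cat addn1. Qed.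

Lemma window_recr s k : window s k.+1 = window s k :|: window (s + k) 1.
Proof. by rewrite -[k.+1]addn1 window_cat. Qed.

Lemma window0 s : window s 0 = set0.
Proof. exact/cards0_eq/card_window. Qed.

Lemma window1 s : window s 1 = [set inZp s].
Proof.
apply/setP => x; rewrite inE; apply/imsetP/eqP => [[i _ ->] | ->].
  by rewrite ord1 addn0.
by exists ord0; rewrite ?addn0.
Qed.

Lemma window_full s : window s q = [set: 'I_q].
Proof. by apply/eqP; rewrite eqEcard subsetT cardsT card_ord card_window ?leqnn. Qed.

Lemma window_shift s b k : [set x | (x + inZp b)%R \in window (s + b) k] = window s k.
Proof.
apply/setP => x; rewrite inE; apply/imsetP/imsetP => -[i _ e]; exists i => //.
  by apply: (addIr (inZp b)); rewrite e -inZpD addnAC.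
by rewrite e -inZpD addnAC.
Qed.

Lemma windowU s k : 0 < k -> window s k :|: window s.+1 k = window s k.+1.
Proof.
case: k => [//|k] _; rewrite [RHS]window_recl window_recl -setUA.
by congr (_ :|: _); apply/setUidPr; rewrite window_recr subsetUl.
Qed.

Lemma windowI s k : 0 < k < q -> window s k :&: window s.+1 k = window s.+1 k.-1.
Proof.
case: k => [//|k] /= ltkq.
have := cardsUI (window s k.+1) (window s.+1 k.+1).
rewrite windowU // !card_window; [move=> cardUI | lia..].
apply/eqP; rewrite eq_sym eqEcard subsetI.
rewrite {1}window_recl subsetUr {1}window_recr subsetUl /=.
by rewrite -(leq_add2l k.+2) cardUI card_window; lia.
Qed.

(* floor((n - q - k) / 2) + 1, shifted by 2q to keep it nonnegative. *)
Definition min_window_start n k := (n + 3 * q + 2 - k) %/ 2.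

(* With unit weights the count is by subset size, so this is a sum of k
   consecutive mod-q binomial coefficients of n; these are the k smallest. *)
Definition min_window_sum n k :=
  nsums_in (fun _ : 'I_n => 1) (window (min_window_start n k) k).

Lemma min_window_sumS n k :
  0 < k < q -> min_window_sum n.+1 k = min_window_sum n k.-1 + min_window_sum n k.+1.
Proof.
move=> k_range; have /andP[k_gt0 _] := k_range.
rewrite /min_window_sum; set s := min_window_start n k.+1.
have -> : min_window_start n.+1 k = s + 1 by rewrite /s /min_window_start; lia.
have -> : min_window_start n k.-1 = s.+1 by rewrite /s /min_window_start; lia.
by rewrite nsums_inS /= window_shift addnC addn1 nsums_inUI windowU // windowI // addnC.
Qed.

Lemma min_window_sum_full n : min_window_sum n q = 2 ^ n.
Proof. by rewrite /min_window_sum window_full nsums_inT. Qed.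

Lemma min_window_sum0 n : min_window_sum n 0 = 0.
Proof. by rewrite /min_window_sum window0 nsums_in0. Qed.

Lemma min_window_sum_nil k : k < q -> min_window_sum 0 k = 0.
Proof.
move=> kq; rewrite /min_window_sum nsums_in_nil.
apply/eqP; rewrite eqb0; apply/imsetP => -[i _ /(congr1 val) /=]; set t := _ + i.
have lo : q < t by rewrite /t /min_window_start; lia.
have hi : t < q + q by have := ltn_ord i; rewrite /t /min_window_start; lia.
by rewrite mod0n -(subnKC (ltnW lo)) modnDl modn_small; lia.
Qed.

Lemma min_window_sum_convex n : convex_upto (min_window_sum n) q.
Proof.
elim: n => [i iq | n IH]; first by rewrite min_window_sum_nil.
apply: (convex_upto_rec (min_window_sum0 n) (min_window_sum0 n.+1) _ _ IH).
  by rewrite !min_window_sum_full expnS.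
exact: min_window_sumS.
Qed.

Lemma card_transl_setU c (X : {set 'I_q}) :
  coprime c q -> 0 < #|X| < q -> #|X| < #|X :|: [set x | (x + inZp c)%R \in X]|.
Proof.
move=> co_cq /andP[X_gt0 X_ltq]; set Y := [set x | _].
have cardY : #|Y| = #|X| := card_preimset _ (addIr (inZp c)).
rewrite ltnNge; apply/negP => le_UX.
have UX : X :|: Y = X by apply/eqP; rewrite eq_sym eqEcard subsetUl le_UX.
have YX : Y = X by apply/eqP; rewrite eqEcard cardY leqnn andbT -UX subsetUr.
(* The group law of 'I_q is +%R, so Y is a right translate in group notation. *)
have [X0 | XT] := set_stable_by_generator (cycle_inZp_coprime co_cq) YX.
  by move: X_gt0; rewrite X0 cards0.
by move: X_ltq; rewrite XT cardsT card_ord ltnn.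
Qed.

Lemma min_window_sum_le n (a : 'I_n -> nat) (X : {set 'I_q}) :
  (forall i, coprime (a i) q) -> min_window_sum n #|X| <= nsums_in a X.
Proof.
elim: n a X => [|n IH] a X a_co; have [-> | X_nT] := eqVneq X [set: 'I_q];
  try by rewrite cardsT card_ord min_window_sum_full nsums_inT.
all: have X_ltq : #|X| < q
  by move: X_nT; rewrite -properT => /proper_card; rewrite cardsT card_ord.
  by rewrite min_window_sum_nil.
have [-> | X_gt0] := posnP #|X|; first by rewrite min_window_sum0.
set Y : {set 'I_q} := [set x | (x + inZp (a ord0))%R \in X].
have cardY : #|Y| = #|X| := card_preimset _ (addIr _).
have X_lt_U : #|X| < #|X :|: Y|
  by apply: card_transl_setU; rewrite ?a_co ?X_gt0.
have U_le_q : #|X :|: Y| <= q by rewrite (leq_trans (max_card _)) ?card_ord.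
have := cardsUI X Y; rewrite cardY => cardUI.
rewrite nsums_inS -/Y nsums_inUI min_window_sumS ?X_gt0 //.
apply: (leq_trans _ (leq_add (IH _ (X :|: Y) _) (IH _ (X :&: Y) _))); try by move=> i.
rewrite [leqRHS]addnC; apply: (convex_upto_spread (min_window_sum_convex n)); lia.
Qed.

Lemma nsums_in_ones_set1 n t :
  nsums_in (fun _ : 'I_n => 1) [set inZp t] = binom_mod n t q.
Proof.
elim: n t => [|n IH] t.
  rewrite nsums_in_nil inE /binom_mod big_mkcond big_nat1 bin0 -val_eqE /=.
  by rewrite -[(0 == t %[mod q])%Z]/(_ == _) !modz_nat eqz_nat; case: eqP.
have shift : [set x | (x + inZp 1)%R \in [set inZp t]] = [set inZp (t + p)] :> {set 'I_q}.
  have e : (inZp (t + p) + inZp 1)%R = inZp t :> 'I_q.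
    by rewrite -inZpD -addnA addn1; apply: val_inj; rewrite /= modnDr.
  by apply/setP => x; rewrite !inE -e (inj_eq (addIr _)).
rewrite nsums_inS /= shift !IH binom_modS; congr (_ + _); apply: binom_mod_congr.
have -> : ((t + p)%:Z = t%:Z - 1 + q%:Z)%R by lia.
by rewrite modzDr.
Qed.

Lemma binom_mod_ceil_half n :
  binom_mod n (ceil_half (n%:Z - q%:Z)%R) q = min_window_sum n 1.
Proof.
rewrite /min_window_sum window1 nsums_in_ones_set1; apply: binom_mod_congr.
have -> : ceil_half (n%:Z - q%:Z)%R = ((-2) * q%:Z + (min_window_start n 1)%:Z)%R.
  by rewrite /ceil_half /min_window_start; lia.
by rewrite modzMDl.
Qed.

End SubsetSumsModQ.

Theorem corollary2 (q n : nat) (hq : (1 <= q)%N) (hn : (q.-1 <= n)%N) :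
  (forall (a : 'I_n -> nat) (rho : nat),
      (forall i, coprime (a i) q) ->
      (binom_mod n (ceil_half (n%:Z - q%:Z)%R) q <= nsols q a rho)%N)
  /\
  (exists (a : 'I_n -> nat) (rho : nat),
      (forall i, coprime (a i) q) /\
      nsols q a rho = binom_mod n (ceil_half (n%:Z - q%:Z)%R) q).
Proof.
case: q hq hn => [// | p] _ _; rewrite binom_mod_ceil_half; split.
  move=> a rho a_co; rewrite nsols_nsums_in.
  by have := min_window_sum_le [set inZp rho] a_co; rewrite cards1.
exists (fun _ => 1), (min_window_start p n 1); split; first by move=> i; exact: coprime1n.
by rewrite nsols_nsums_in /min_window_sum window1.
Qed.
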